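(* Let $k\ge n\ge 2$, and let $\pi$ assign to each $n$-element subset $S\subseteq[k]$ a string $\pi(S)$ of length $n$ that is an ordering of the elements of $S$. Let $R\subseteq[k]$ with $|R|=n-1$, and suppose that $d(\pi(S),\pi(S'))\le 2$ for all $S,S'\in\mathcal U_R$. Then there exists a subset $A_R\subseteq R$ of size $n-2$ such that $R$ freezes $A_R$.
   Context: $[k]=\{1,\dots,k\}$; $d$ is Hamming distance; $\pi(S)[i]$ is the letter at position $i\in[n]$ of $\pi(S)$. For a set $R\subseteq[k]$, $\mathcal U_R$ is the set of all sets $S\subseteq[k]$ with $R\subset S$ and $|S|=|R|+1$. For $|R|=n-1$ and $A_R\subseteq R$, we say $R$ freezes $A_R$ (with freezing function $g_R$) if there is a one-to-one map $g_R:A_R\to[n]$ such that $\pi(S)[g_R(a)]=a$ for all $a\in A_R$ and all $S\in\mathcal U_R$. *)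

(* [k] is represented by 'I_k (0-indexed), positions [n] by 'I_n. *)
From mathcomp Require Import all_boot.
Set Implicit Arguments. Unset Strict Implicit. Unset Printing Implicit Defensive.

Definition hamming (T : eqType) (n : nat) (s t : n.-tuple T) : nat :=
  #|[set i : 'I_n | tnth s i != tnth t i]|.

Definition U_of (k : nat) (R : {set 'I_k}) : {set {set 'I_k}} :=
  [set S : {set 'I_k} | (R \subset S) && (#|S| == #|R|.+1)].

Definition is_ordering_assignment (k n : nat) (pi : {set 'I_k} -> n.-tuple 'I_k) : Prop :=
  forall S : {set 'I_k}, #|S| = n -> perm_eq (pi S) (enum S).

Definition freezes (k n : nat) (pi : {set 'I_k} -> n.-tuple 'I_k)
    (R A : {set 'I_k}) : Prop :=
  exists g : 'I_k -> 'I_n,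
    {in A &, injective g} /\
    (forall a, a \in A -> forall S, S \in U_of R -> tnth (pi S) (g a) = a).

(* Fix x0 outside R and compare every pi(S), S in U_R, with the base string
   t0 = pi(R + x0); let q be the position of x0 in t0.  If S <> R + x0 then
   x0 is not in S, so position q always differs from t0.  Hence if a letter
   t0[i] of R is displaced in pi(S), it must reappear at the only other
   differing position, namely q, and all other letters stay put.  Two strings
   pi(S1), pi(S2) displacing different letters of R would then differ at three
   positions, so at most one letter b of R is ever displaced.  The remaining
   letters R \ {b} are frozen at their positions in t0. *)

From mathcomp Require Import all_boot.

Lemma three_distinct_card {T : finType} {D : {set T}} {x y z : T} :
  x \in D -> y \in D -> z \in D -> x != y -> x != z -> y != z -> 3 <= #|D|.
Proof.
move=> xD yD zD xy xz yz.
have sub : [set x; y; z] \subset D.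
  by apply/subsetP => w; rewrite !inE => /orP[/orP[]|] /eqP->.
apply: leq_trans (subset_leq_card sub).
by rewrite setUC cardsU1 cards2 !inE negb_or (eq_sym z x) (eq_sym z y) xy xz yz.
Qed.

Lemma card_le2_subset {T : finType} {D : {set T}} {x y : T} :
  #|D| <= 2 -> x \in D -> y \in D -> x != y -> D \subset [set x; y].
Proof.
move=> cardD xD yD xy; apply/subsetP => z zD; rewrite !inE.
apply/negPn/negP; rewrite negb_or => /andP[zx zy].
have := three_distinct_card xD yD zD xy; rewrite eq_sym zx eq_sym zy.
by move=> /(_ isT isT) /leq_trans /(_ cardD).
Qed.

Section Strings.
Context {T : eqType} {n : nat}.

Definition diff_pos (s t : n.-tuple T) : {set 'I_n} :=
  [set i | tnth s i != tnth t i].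

Lemma in_diff_pos (s t : n.-tuple T) (i : 'I_n) :
  (i \in diff_pos s t) = (tnth s i != tnth t i).
Proof. by rewrite inE. Qed.

Lemma displaced_letter {s t : n.-tuple T} {i : 'I_n} :
  uniq t -> tnth t i \in s -> i \in diff_pos s t ->
  exists j, [/\ j != i, tnth s j = tnth t i & j \in diff_pos s t].
Proof.
move=> /tuple_uniqP t_inj /tnthP[j sj] iD; exists j.
have ji : j != i by apply: contraTneq iD => eji; rewrite in_diff_pos sj eji eqxx.
split=> //; rewrite in_diff_pos -sj.
by apply: contra ji => /eqP /t_inj ->.
Qed.

Lemma position_fun (t : n.-tuple T) (i0 : 'I_n) :
  exists g : T -> 'I_n, forall a, a \in t -> tnth t (g a) = a.
Proof.
exists (fun a => odflt i0 [pick i | tnth t i == a]) => a /tnthP[i ->].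
by case: pickP => [j /eqP //|/(_ i)]; rewrite eqxx.
Qed.

End Strings.

Section Freezing.
Context {k n : nat} {R : {set 'I_k}}.
Context { pi : {set 'I_k} -> n.-tuple 'I_k }.
Hypothesis pi_ordering : is_ordering_assignment pi.
Hypothesis cardR : #|R|.+1 = n.
Hypothesis close : forall S1 S2, S1 \in U_of R -> S2 \in U_of R ->
  #|diff_pos (pi S1) (pi S2)| <= 2.

Lemma U_ofP {S : {set 'I_k}} : S \in U_of R -> R \subset S /\ #|S| = n.
Proof. by rewrite inE -cardR => /andP[RS /eqP]. Qed.

Lemma mem_pi {S : {set 'I_k}} {x : 'I_k} :
  S \in U_of R -> (x \in pi S) = (x \in S).
Proof. by case/U_ofP => _ /pi_ordering/perm_mem ->; rewrite mem_enum. Qed.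

Lemma uniq_pi {S : {set 'I_k}} : S \in U_of R -> uniq (pi S).
Proof. by case/U_ofP => _ /pi_ordering/perm_uniq ->; apply: enum_uniq. Qed.

Context {x0 : 'I_k}.
Hypothesis x0_notin_R : x0 \notin R.

Let S0 := x0 |: R.
Let t0 := pi S0.
Let D (S : {set 'I_k}) : {set 'I_n} := diff_pos (pi S) t0.

Lemma S0_in_U : S0 \in U_of R.
Proof. by rewrite /S0 inE subsetUr cardsU1 x0_notin_R add1n eqxx. Qed.

Lemma t0_inj : injective (tnth t0).
Proof. exact/tuple_uniqP/uniq_pi/S0_in_U. Qed.

Lemma U_x0 {S : {set 'I_k}} : S \in U_of R -> x0 \in S -> S = S0.
Proof.
move=> /U_ofP[RS cardS] x0S; apply/eqP; rewrite eq_sym eqEcard.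
have [_ ->] := U_ofP S0_in_U.
by rewrite /S0 subUset sub1set x0S RS cardS leqnn.
Qed.

Context {q : 'I_n}.
Hypothesis t0_q : tnth t0 q = x0.

Lemma R_letter_not_at_q {i : 'I_n} : tnth t0 i \in R -> i != q.
Proof. by apply: contraTneq => ->; rewrite t0_q. Qed.

Lemma displaced_to_q {S : {set 'I_k}} {i : 'I_n} :
  S \in U_of R -> i \in D S -> tnth t0 i \in R ->
  tnth (pi S) q = tnth t0 i /\ D S \subset [set i; q].
Proof.
move=> SU iD t0iR.
have x0S : x0 \notin S.
  by apply: contraTN iD => /(U_x0 SU) ->; rewrite in_diff_pos eqxx.
have qD : q \in D S.
  rewrite in_diff_pos t0_q; apply: contraNneq x0S => <-.
  by rewrite -(mem_pi SU) mem_tnth.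
have DS := card_le2_subset (close _ _ SU S0_in_U) iD qD (R_letter_not_at_q t0iR).
have t0iS : tnth t0 i \in pi S by rewrite (mem_pi SU) (subsetP (proj1 (U_ofP SU))).
have [j [ji <- jD]] := displaced_letter (uniq_pi S0_in_U) t0iS iD.
split=> //; move: (subsetP DS j jD); rewrite !inE (negbTE ji) /=.
by move=> /eqP->.
Qed.

Lemma others_stay {S : {set 'I_k}} {i j : 'I_n} :
  S \in U_of R -> i \in D S -> tnth t0 i \in R -> j != i -> tnth t0 j \in R ->
  tnth (pi S) j = tnth t0 j.
Proof.
move=> SU iD t0iR ji t0jR; apply/eqP/negPn; rewrite -(in_diff_pos _ t0).
have [_ /subsetP DS] := displaced_to_q SU iD t0iR.
apply/negP => /DS; rewrite !inE (negbTE ji) /=.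
exact/negP/R_letter_not_at_q.
Qed.

(* Two members of U_R never displace different letters of R: otherwise
   their orderings would differ at i1, i2 and q. *)
Lemma displaced_unique {S1 S2 : {set 'I_k}} {i1 i2 : 'I_n} :
  S1 \in U_of R -> S2 \in U_of R -> i1 \in D S1 -> i2 \in D S2 ->
  tnth t0 i1 \in R -> tnth t0 i2 \in R -> i1 = i2.
Proof.
move=> S1U S2U i1D i2D t0i1R t0i2R; apply/eqP/negPn/negP => i12.
have [q1 _] := displaced_to_q S1U i1D t0i1R.
have [q2 _] := displaced_to_q S2U i2D t0i2R.
have i1E : i1 \in diff_pos (pi S1) (pi S2).
  by rewrite in_diff_pos (others_stay S2U i2D t0i2R i12 t0i1R) -in_diff_pos.
have i2E : i2 \in diff_pos (pi S1) (pi S2).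
  have i21 : i2 != i1 by rewrite eq_sym.
  by rewrite in_diff_pos (others_stay S1U i1D t0i1R i21 t0i2R) eq_sym -in_diff_pos.
have qE : q \in diff_pos (pi S1) (pi S2).
  by rewrite in_diff_pos q1 q2 (inj_eq t0_inj).
have := three_distinct_card i1E i2E qE i12
  (R_letter_not_at_q t0i1R) (R_letter_not_at_q t0i2R).
by move=> /leq_trans /(_ (close _ _ S1U S2U)).
Qed.

(* Hence some letter b of R is the only letter of R ever displaced; the
   element r of R serves as b when no letter is displaced at all. *)
Lemma displaced_letter_of_R {r : 'I_k} : r \in R ->
  exists2 b, b \in R & forall S i, S \in U_of R -> i \in D S ->
    tnth t0 i \in R -> tnth t0 i = b.
Proof.
move=> rR.
case: (pickP (fun i => (tnth t0 i \in R) && [exists S in U_of R, i \in D S])).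
  move=> i /andP[t0iR /existsP[S1 /andP[S1U iD]]].
  exists (tnth t0 i) => // S j SU jD t0jR.
  by rewrite (displaced_unique SU S1U jD iD t0jR t0iR).
move=> none; exists r => // S i SU iD t0iR; move: (none i).
by rewrite t0iR /=; move/existsP; case; exists S; rewrite SU.
Qed.

Lemma freezes_all_but {b : 'I_k} :
  (forall S i, S \in U_of R -> i \in D S -> tnth t0 i \in R -> tnth t0 i = b) ->
  freezes pi R (R :\ b).
Proof.
move=> only_b.
have [i0 _] : exists i0, x0 = tnth t0 i0.
  by apply/tnthP; rewrite (mem_pi S0_in_U) setU11.
have [g gt0] := position_fun t0 i0.
have gK a : a \in R -> tnth t0 (g a) = a.
  by move=> aR; rewrite gt0 // (mem_pi S0_in_U) setU1r.
exists g; split.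
  by move=> a1 a2 /setD1P[_ a1R] /setD1P[_ a2R] g12; rewrite -(gK _ a1R) g12 gK.
move=> a /setD1P[ab aR] S SU; rewrite -{2}(gK _ aR).
apply/eqP/negPn; rewrite -(in_diff_pos _ t0); apply/negP => gaD.
have := only_b S _ SU gaD; rewrite gK // => /(_ aR) a_eq_b.
by rewrite a_eq_b eqxx in ab.
Qed.

End Freezing.

Theorem lemma3p6 (k n : nat) (pi : {set 'I_k} -> n.-tuple 'I_k) (R : {set 'I_k}) :
  2 <= n -> n <= k ->
  is_ordering_assignment pi ->
  #|R| = n.-1 ->
  (forall S S', S \in U_of R -> S' \in U_of R -> hamming (pi S) (pi S') <= 2) ->
  exists A : {set 'I_k}, [/\ A \subset R, #|A| = n - 2 & freezes pi R A].
Proof.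
move=> n_ge2 n_le_k pi_ordering cardR close.
have cardR1 : #|R|.+1 = n by rewrite cardR prednK // ltnW.
have [x0 _ x0_notin_R] : exists2 x0, x0 \in [set: 'I_k] & x0 \notin R.
  apply/subsetPn/negP => /subset_leq_card.
  by rewrite cardsT card_ord -ltnS cardR1 ltnNge n_le_k.
have [r rR] : exists r, r \in R.
  by apply/card_gt0P; rewrite -ltnS cardR1 n_ge2.
have [q t0_q] : exists q, tnth (pi (x0 |: R)) q = x0.
  have : x0 \in pi (x0 |: R).
    by rewrite (mem_pi pi_ordering cardR1 (S0_in_U x0_notin_R)) setU11.
  by case/tnthP => q x0_q; exists q; rewrite -x0_q.
have [b bR only_b] := displaced_letter_of_R pi_ordering cardR1 close x0_notin_R t0_q rR.
exists (R :\ b); split; first exact: subsetDl.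
  by move: (cardsD1 b R); rewrite bR cardR subn2 => ->.
exact: (freezes_all_but pi_ordering cardR1 x0_notin_R only_b).
Qed.
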